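(* Let $C_0$ be a binary linear $[n_0,n_0-r_0,3]_2 2$ code (minimum distance $3$, covering radius $2$) with parity-check matrix $H_0=[h_1\cdots h_{n_0}]$, $h_j\in\mathbb{F}_2^{r_0}$, and let $\mathcal P_0$ be a $2$-partition of the columns of $H_0$ into $p$ subsets. Let $m\ge 1$ satisfy $2^m\ge p$. Choose an indicator assignment $\beta_1,\dots,\beta_{n_0}$ with all $\beta_j\in\{*\}\cup(\mathbb{F}_{2^m}\setminus\{1\})$. Fix a nonzero column $w\in\mathbb{F}_2^m$, let $W_m\setminus w$ be $W_m$ with the column $w$ removed, and let $$D_6=\begin{bmatrix}0_{r_0}&0_{r_0}&0_{r_0}\\ W_m\setminus w& w& 0_m\\ 0_m& w& W_m\setminus w\end{bmatrix}$$ (an $(r_0+2m)\times(2^{m+1}-3)$ matrix, $0_v$ denoting zero blocks with $v$ rows). Let $H_C=[D_6\ A_2(h_1,\beta_1)\ \cdots\ A_2(h_{n_0},\beta_{n_0})]$. Then $H_C$ is the parity-check matrix of a binary linear $[n,n-r,3]_2 2$ code with $n=2^m(n_0+2)-3$ and $r=r_0+2m$; i.e. every vector of $\mathbb{F}_2^{r}$ is a column of $H_C$ or a sum of two columns of $H_C$.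
   Context: For a binary linear code with $r\times n$ parity-check matrix $H$ ($r$ = codimension), the covering radius is the smallest $R$ such that every vector of $\mathbb{F}_2^r$ is a sum of at most $R$ columns of $H$ (the zero vector being the empty sum). An $[n,n-r,d]_2R$ code is a binary linear code of length $n$, codimension $r$, minimum distance $d$, covering radius $R$. Partitions: for an $r\times n$ parity-check matrix $H$ and $0\le\ell\le R$, a partition of the column set of $H$ into nonempty subsets is an $(R,\ell)$-partition if every vector of $\mathbb{F}_2^r$ (including zero) is the sum of at least $\ell$ and at most $R$ columns of $H$ lying in pairwise distinct subsets (for $\ell=0$ the zero vector is the empty sum). For $R=2$ and minimum distance $\ge3$, a $(2,0)$-partition is called a $2$-partition. Construction notation: fix $m\ge1$ and identify $\mathbb{F}_2^m$ with the field $\mathbb{F}_{2^m}$ via a fixed $\mathbb{F}_2$-basis, so field products apply to $m$-bit columns. For $h\in\mathbb{F}_2^{r_0}$, an integer $R\ge2$ and $\beta\in\mathbb{F}_{2^m}\cup\{*\}$, $A_R(h,\beta)$ is the $(r_0+Rm)\times 2^m$ binary matrix whose columns, indexed by $\xi\in\mathbb{F}_{2^m}$, are $(h,\xi,\beta\xi,\beta^2\xi,\dots,\beta^{R-1}\xi)^T$ if $\beta\in\mathbb{F}_{2^m}$, and $(h,0_{(R-1)m},\xi)^T$ if $\beta=*$. $W_m$ is the $m\times(2^m-1)$ matrix whose columns are all nonzero vectors of $\mathbb{F}_2^m$ (parity-check matrix of the Hamming code). Given $H_0=[h_1\cdots h_{n_0}]$ and a partition $\mathcal P_0$ of its columns,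 an indicator assignment is a choice $\beta_j\in\mathbb{F}_{2^m}\cup\{*\}$ for each $j$ such that $\beta_i\ne\beta_j$ whenever $h_i,h_j$ lie in distinct subsets of $\mathcal P_0$. *)

From HB Require Import structures.
From mathcomp Require Import all_boot all_order all_algebra all_field.
Set Implicit Arguments. Unset Strict Implicit. Unset Printing Implicit Defensive.
Import GRing.Theory.
Local Open Scope ring_scope.

Definition wt (n : nat) (c : 'rV['F_2]_n) : nat := #|[set j | c 0 j != 0]|.

Definition codeword (r n : nat) (H : 'M['F_2]_(r, n)) (c : 'rV['F_2]_n) : Prop :=
  H *m c^T = 0.

Definition min_distance (r n : nat) (H : 'M['F_2]_(r, n)) (d : nat) : Prop :=
  (exists c, c != 0 /\ codeword H c /\ wt c = d) /\
  (forall c, c != 0 -> codeword H c -> (d <= wt c)%N).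

Definition sum_of_at_most (r n : nat) (H : 'M['F_2]_(r, n)) (R : nat)
  (v : 'cV['F_2]_r) : Prop :=
  exists S : {set 'I_n}, (#|S| <= R)%N /\ \sum_(j in S) col j H = v.

Definition covering_radius (r n : nat) (H : 'M['F_2]_(r, n)) (R : nat) : Prop :=
  (forall v, sum_of_at_most H R v) /\
  (forall R', (forall v, sum_of_at_most H R' v) -> (R <= R')%N).

(* H is a parity-check matrix of an [n, n-r, d]_2 R code:
   length n (number of columns), codimension r (rank H = r, i.e. dim ker = n - r),
   minimum distance d, covering radius R. *)
Definition code_params (r n : nat) (H : 'M['F_2]_(r, n)) (d R : nat) : Prop :=
  \rank H = r /\ min_distance H d /\ covering_radius H R.

(* A partition of the columns of H into p nonempty subsets, given by the
   block label f j of column j (block k = {j | f j = k}). *)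
Definition nonempty_blocks (n p : nat) (f : 'I_n -> 'I_p) : Prop :=
  forall k : 'I_p, exists j, f j = k.

Definition Rl_partition (r n p : nat) (H : 'M['F_2]_(r, n)) (f : 'I_n -> 'I_p)
  (R l : nat) : Prop :=
  nonempty_blocks f /\
  forall v : 'cV['F_2]_r, exists S : {set 'I_n},
    [/\ (l <= #|S|)%N, (#|S| <= R)%N, {in S &, injective f}
      & \sum_(j in S) col j H = v].

Definition two_partition (r n p : nat) (H : 'M['F_2]_(r, n)) (f : 'I_n -> 'I_p) :=
  Rl_partition H f 2 0.

(* Indicator assignment: beta j = None stands for the symbol *. *)
Definition indicator_assignment (n p : nat) (F : Type) (f : 'I_n -> 'I_p)
  (beta : 'I_n -> option F) : Prop :=
  forall i j, f i != f j -> beta i <> beta j.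

Definition mxofcols (r : nat) (s : seq 'cV['F_2]_r) : 'M['F_2]_(r, size s) :=
  \matrix_(i, j) (nth 0 s j) i 0.

Section Construction.
Variables (r0 m : nat) (F : finFieldType) (phi : F -> 'cV['F_2]_m).
(* phi : the fixed identification F_{2^m} ~ F_2^m *)

Definition A2_cols (h : 'cV['F_2]_r0) (beta : option F)
  : seq 'cV['F_2]_(r0 + (m + m)) :=
  [seq match beta with
       | Some b => col_mx h (col_mx (phi xi) (phi (b * xi)))
       | None => col_mx h (col_mx 0 (phi xi))
       end | xi <- enum F].

Definition Wm_minus (w : 'cV['F_2]_m) : seq 'cV['F_2]_m :=
  [seq v <- enum 'cV['F_2]_m | (v != 0) && (v != w)].

Definition D6_cols (w : 'cV['F_2]_m) : seq 'cV['F_2]_(r0 + (m + m)) :=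
  [seq col_mx 0 (col_mx x 0) | x <- Wm_minus w] ++
  [:: col_mx 0 (col_mx w w)] ++
  [seq col_mx 0 (col_mx 0 x) | x <- Wm_minus w].

Definition HC_cols (n0 : nat) (H0 : 'M['F_2]_(r0, n0)) (beta : 'I_n0 -> option F)
  (w : 'cV['F_2]_m) : seq 'cV['F_2]_(r0 + (m + m)) :=
  D6_cols w ++ flatten [seq A2_cols (col j H0) (beta j) | j <- enum 'I_n0].

End Construction.

From HB Require Import structures.
From mathcomp Require Import all_boot all_order all_algebra all_field.
From mathcomp Require Import ring zify.
Set Implicit Arguments. Unset Strict Implicit. Unset Printing Implicit Defensive.
Import GRing.Theory.
Local Open Scope ring_scope.

(* Write a vector of F_2^(r0 + 2m) as (u, phi a, phi b) with a, b in F, and let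
   phi o = w.  The columns of H_C are (h_j, xi, c xi) when beta_j = c,
   (h_j, 0, xi) when beta_j = *, (0, x, 0) and (0, 0, x) for x outside {0, o},
   and (0, o, o).  As P_0 is a 2-partition, u is 0, some h_j, or h_i + h_k with
   beta_i <> beta_k.  In the last case one column of each of the two A_2 blocks
   suffices, since the linear system for their parameters has determinant
   beta_i - beta_k <> 0.  For u = h_j one A_2 column fixes all coordinates but
   one and a D_6 column supplies the last; the only obstruction is c o = o,
   i.e. beta_j = 1.  For u = 0 the D_6 columns suffice, except for (0, o, 0)
   and (0, 0, o) when F = {0, o}; then two blocks with beta = 0 and beta = *
   exist and each of them yields one of these vectors.  The columns (h_j, 0, 0)
   reproduce H_0, so a weight-3 codeword of C_0 gives one of the new code. *)

Lemma F2_cases (x : 'F_2) : x = 0 \/ x = 1.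
Proof. by case: x => [[|[|k]]] // ?; [left|right]; apply/val_inj. Qed.

Lemma addrr_F2 (r n : nat) (v : 'M['F_2]_(r, n)) : v + v = 0.
Proof. by apply/matrixP=> i j; rewrite !mxE addrr_pchar2 // pchar_Fp. Qed.

Lemma oppr_F2 (r n : nat) (v : 'M['F_2]_(r, n)) : - v = v.
Proof. by apply/eqP; rewrite -subr_eq0 -opprD addrr_F2 oppr0. Qed.

Lemma addr_eq0_F2 (r n : nat) (u v : 'M['F_2]_(r, n)) : (u + v == 0) = (u == v).
Proof. by rewrite -(subr_eq0 u v) oppr_F2. Qed.

Section ParityCheck.
Variables (r n : nat) (H : 'M['F_2]_(r, n)).

Definition supp (c : 'rV['F_2]_n) : {set 'I_n} := [set j | c 0 j != 0].

Definition ind_row (S : {set 'I_n}) : 'rV['F_2]_n := \row_j (j \in S)%:R.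

Lemma supp_ind_row S : supp (ind_row S) = S.
Proof. by apply/setP=> j; rewrite inE mxE; case: (j \in S); rewrite ?oner_eq0 ?eqxx. Qed.

Lemma supp_eq0 c : (supp c == set0) = (c == 0).
Proof.
apply/eqP/eqP=> [c0|->]; last by apply/setP=> j; rewrite !inE mxE eqxx.
apply/matrixP=> i j; rewrite (ord1 i) mxE; apply/eqP/negPn/negP => nz.
by have := in_set0 j; rewrite -c0 inE nz.
Qed.

Lemma ind_row_eq0 S : (ind_row S == 0) = (S == set0).
Proof. by rewrite -supp_eq0 supp_ind_row. Qed.

Lemma wt_ind_row S : wt (ind_row S) = #|S|.
Proof. by rewrite /wt -/(supp _) supp_ind_row. Qed.

Lemma mulmx_tr_supp c : H *m c^T = \sum_(j in supp c) col j H.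
Proof.
apply/matrixP=> i k; rewrite !mxE summxE [RHS]big_mkcond /=.
apply: eq_bigr => j _; rewrite !mxE inE (ord1 k).
by case: (F2_cases (c 0 j)) => ->; rewrite ?mulr0 ?mulr1.
Qed.

Lemma codeword_ind_row S : codeword H (ind_row S) = (\sum_(j in S) col j H = 0).
Proof. by rewrite /codeword mulmx_tr_supp supp_ind_row. Qed.

Lemma min_distance3 :
  (forall j, col j H != 0) -> injective (fun j => col j H) ->
  (exists S : {set 'I_n}, #|S| = 3%N /\ \sum_(j in S) col j H = 0) ->
  min_distance H 3.
Proof.
move=> nz inj [S [cS sS]]; split.
  exists (ind_row S); rewrite ind_row_eq0 codeword_ind_row wt_ind_row.
  by rewrite -card_gt0 cS.
move=> c c0; rewrite /codeword mulmx_tr_supp /wt -/(supp c) => hc.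
rewrite leqNgt; apply/negP; rewrite ltnS leq_eqVlt ltnS leq_eqVlt ltnS leqn0.
case/or3P.
- case/cards2P=> [i [k [ik Sc]]]; move: hc; rewrite Sc big_setU1 ?inE //= big_set1.
  by move/eqP; rewrite addr_eq0_F2 (inj_eq inj) (negPf ik).
- by case/cards1P=> j Sc; move: hc; rewrite Sc big_set1; apply/eqP.
- by rewrite cards_eq0 supp_eq0 (negPf c0).
Qed.

Lemma min_distance_col_neq0 d : min_distance H d -> (1 < d)%N -> forall j, col j H != 0.
Proof.
case=> _ md d1 j; apply/eqP => cj0; have := md (ind_row [set j]).
rewrite ind_row_eq0 -card_gt0 codeword_ind_row wt_ind_row cards1 big_set1.
by move=> /(_ isT cj0); rewrite leqNgt d1.
Qed.

Lemma min_distance_col_inj d :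
  min_distance H d -> (2 < d)%N -> injective (fun j => col j H).
Proof.
case=> _ md d2 i k cik; apply/eqP/negPn/negP => ik; have := md (ind_row [set i; k]).
rewrite ind_row_eq0 -card_gt0 codeword_ind_row wt_ind_row cards2 ik.
rewrite big_setU1 ?inE //= big_set1 cik addrr_F2.
by move=> /(_ isT erefl); rewrite leqNgt d2.
Qed.

Lemma min_distance_dependency d : min_distance H d ->
  exists S : {set 'I_n}, #|S| = d /\ \sum_(j in S) col j H = 0.
Proof. by case=> -[c [_ [cc wc]]] _; exists (supp c); rewrite -mulmx_tr_supp. Qed.

Lemma sum_of_at_mostP R v : reflect (sum_of_at_most H R v)
  [exists S : {set 'I_n}, (#|S| <= R)%N && (\sum_(j in S) col j H == v)].
Proof.
apply: (iffP existsP) => -[S]; first by case/andP=> cS /eqP sS; exists S.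
by case=> cS sS; exists S; rewrite cS sS eqxx.
Qed.

Lemma sum_of_at_most_le R R' v :
  (R <= R')%N -> sum_of_at_most H R v -> sum_of_at_most H R' v.
Proof. by move=> RR' [S [cS sS]]; exists S; split=> //; apply: leq_trans RR'. Qed.

Lemma full_rank_of_cover R : (forall v, sum_of_at_most H R v) -> \rank H = r.
Proof.
move=> cov; rewrite -mxrank_tr; apply/eqP; change (row_full H^T).
rewrite -sub1mx; apply/row_subP=> i; have [S [_ sS]] := cov (row i 1%:M)^T.
by rewrite -[row i _]trmxK -sS raddf_sum /= summx_sub // => j _; rewrite tr_col row_sub.
Qed.

Lemma covering_radiusS R : (forall v, sum_of_at_most H R.+1 v) ->
  (exists v, ~ sum_of_at_most H R v) -> covering_radius H R.+1.
Proof.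
move=> cov [v nv]; split=> // R' covR'; rewrite ltnNge; apply/negP => R'R.
exact/nv/(sum_of_at_most_le R'R).
Qed.

Lemma covering_radius_witness R :
  covering_radius H R.+1 -> exists v, ~ sum_of_at_most H R v.
Proof.
case=> _ minR.
have : ~~ [forall v, [exists S : {set 'I_n},
                       (#|S| <= R)%N && (\sum_(j in S) col j H == v)]].
  apply/negP => /forallP cov.
  by have := minR R (fun v => elimT (sum_of_at_mostP R v) (cov v)); rewrite ltnn.
by rewrite negb_forall => /existsP [v /sum_of_at_mostP nv]; exists v.
Qed.

Lemma Rl_partition_cover_blocks p (f : 'I_n -> 'I_p) R l :
  Rl_partition H f R l -> forall v, sum_of_at_most H p v.
Proof.
case=> _ part v; have [S [_ _ inj sS]] := part v; exists S; split=> //.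
by rewrite -(card_in_imset inj); apply: leq_trans (max_card _) _; rewrite card_ord.
Qed.

End ParityCheck.

Section Columns.
Variables (r : nat) (s : seq 'cV['F_2]_r).

Lemma col_mxofcols (j : 'I_(size s)) : col j (mxofcols s) = nth 0 s j.
Proof. by apply/matrixP=> i k; rewrite !mxE (ord1 k). Qed.

Definition col_or0 (x : 'cV['F_2]_r) : bool := (x == 0) || (x \in s).

Lemma col_or0_sum2 x y :
  col_or0 x -> col_or0 y -> sum_of_at_most (mxofcols s) 2 (x + y).
Proof.
have idx z : z \in s -> exists j : 'I_(size s), col j (mxofcols s) = z.
  by move=> zs; exists (Ordinal (etrans (index_mem z s) zs)); rewrite col_mxofcols nth_index.
case/orP=> [/eqP->|/idx [i <-]]; case/orP=> [/eqP->|/idx [k <-]].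
- by exists set0; rewrite cards0 big_set0 addr0.
- by exists [set k]; rewrite cards1 big_set1 add0r.
- by exists [set i]; rewrite cards1 big_set1 addr0.
have [<-|ik] := eqVneq i k; first by exists set0; rewrite cards0 big_set0 addrr_F2.
by exists [set i; k]; rewrite cards2 ik big_setU1 ?inE //= big_set1.
Qed.

Lemma col_or0_sum1 v : sum_of_at_most (mxofcols s) 1 v -> col_or0 v.
Proof.
case=> S [+ <-]; rewrite leq_eqVlt ltnS leqn0 => /orP [/cards1P [j ->]|].
  by rewrite big_set1 col_mxofcols /col_or0 mem_nth ?orbT.
by rewrite cards_eq0 => /eqP ->; rewrite big_set0 /col_or0 eqxx.
Qed.

Lemma mxofcols_col_neq0 j : 0 \notin s -> col j (mxofcols s) != 0.
Proof. by apply: contra => /eqP <-; rewrite col_mxofcols mem_nth. Qed.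

Lemma mxofcols_col_inj : uniq s -> injective (fun j => col j (mxofcols s)).
Proof. by move=> us i k /eqP; rewrite !col_mxofcols nth_uniq // => /eqP /val_inj. Qed.

Lemma mxofcols_sum_set (X : {set 'cV['F_2]_r}) : uniq s -> {subset X <= s} ->
  exists S : {set 'I_(size s)},
    #|S| = #|X| /\ \sum_(j in S) col j (mxofcols s) = \sum_(x in X) x.
Proof.
move=> us Xs; pose c j := col j (mxofcols s); have c_inj := mxofcols_col_inj us.
have XE : X = c @: [set j | c j \in X].
  apply/setP => x; apply/idP/imsetP => [xX|[j]]; last by rewrite inE => ? ->.
  have xs := Xs x xX.
  by exists (Ordinal (etrans (index_mem x s) xs)); rewrite /c ?inE /= col_mxofcols nth_index.
exists [set j | c j \in X]; split; first by rewrite {2}XE card_imset.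
by rewrite {2}XE big_imset //= => i k _ _; apply: c_inj.
Qed.

End Columns.

Lemma mem_Wm_minus m (w x : 'cV['F_2]_m) : (x \in Wm_minus w) = (x != 0) && (x != w).
Proof. by rewrite mem_filter mem_enum andbT. Qed.

Lemma size_Wm_minus m (w : 'cV['F_2]_m) : w != 0 -> size (Wm_minus w) = (2 ^ m - 2)%N.
Proof.
move=> w0; have -> : size (Wm_minus w) = #|[pred v : 'cV_m | (v != 0) && (v != w)]|.
  by rewrite cardE /enum_mem -enumT.
have -> : (2 ^ m)%N = #|{: 'cV['F_2]_m}| by rewrite card_mx card_Fp // muln1.
rewrite [in RHS](cardD1 0) [in RHS](cardD1 w) !inE w0 /= add1n addSn !subSS subn0.
by apply: eq_card => v; rewrite !inE andbT andbC.
Qed.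

Section D6.
Variables (r0 m : nat) (w : 'cV['F_2]_m).

Lemma usubmx_D6_cols z : z \in D6_cols r0 w -> usubmx z = 0.
Proof.
rewrite !mem_cat mem_seq1 => /or3P [/mapP [x _ ->]|/eqP->|/mapP [x _ ->]];
  exact: col_mxKu.
Qed.

Lemma D6_cols_neq0 : w != 0 -> 0 \notin D6_cols r0 w.
Proof.
move=> w0; rewrite !mem_cat mem_seq1 !negb_or; apply/and3P; split.
- apply/mapP=> -[x]; rewrite mem_Wm_minus => /andP [x0 _] /esym/eqP.
  by rewrite !col_mx_eq0 (negPf x0) andbF.
- by rewrite eq_sym !col_mx_eq0 (negPf w0) !andbF.
- apply/mapP=> -[x]; rewrite mem_Wm_minus => /andP [x0 _] /esym/eqP.
  by rewrite !col_mx_eq0 (negPf x0) !andbF.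
Qed.

Lemma uniq_D6_cols : uniq (D6_cols r0 w).
Proof.
have inj1 : injective (fun x : 'cV['F_2]_m => col_mx (0 : 'cV_r0) (col_mx x (0 : 'cV_m))).
  by move=> x y /eq_col_mx [_ /eq_col_mx []].
have inj3 : injective (fun x : 'cV['F_2]_m => col_mx (0 : 'cV_r0) (col_mx (0 : 'cV_m) x)).
  by move=> x y /eq_col_mx [_ /eq_col_mx []].
have uW : uniq (Wm_minus w) by rewrite filter_uniq // enum_uniq.
rewrite cat_uniq map_inj_uniq // uW /= map_inj_uniq // uW andbT !negb_or -andbA.
apply/and3P; split.
- apply/mapP=> -[x]; rewrite mem_Wm_minus => /andP [_ xw] /eq_col_mx [_ /eq_col_mx [wx _]].
  by rewrite wx eqxx in xw.
- apply/hasPn=> z /mapP [x]; rewrite mem_Wm_minus => /andP [x0 _] ->.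
  apply/mapP=> -[y]; rewrite mem_Wm_minus => /andP [y0 _] /eq_col_mx [_ /eq_col_mx [y0' _]].
  by rewrite -y0' eqxx in y0.
- apply/mapP=> -[x]; rewrite mem_Wm_minus => /andP [_ xw] /eq_col_mx [_ /eq_col_mx [_ wx]].
  by rewrite wx eqxx in xw.
Qed.

End D6.

Section Construction.
Variables (r0 m : nat) (F : finFieldType) (phi : F -> 'cV['F_2]_m).
Hypothesis phiD : forall x y : F, phi (x + y) = phi x + phi y.
Hypothesis phiB : bijective phi.

Lemma phi0 : phi 0 = 0.
Proof. by apply: (addrI (phi 0)); rewrite -phiD !addr0. Qed.

Lemma phi_inj : injective phi.
Proof. exact: bij_inj. Qed.

Lemma phi_surj a : exists x, phi x = a.
Proof. by case: phiB => g _ gK; exists (g a). Qed.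

Lemma phi_eq0 x : (phi x == 0) = (x == 0).
Proof. by rewrite -phi0 (inj_eq phi_inj). Qed.

Lemma addrr_char2 (x : F) : x + x = 0.
Proof. by apply: phi_inj; rewrite phiD phi0 addrr_F2. Qed.

Definition vcat (u : 'cV['F_2]_r0) (x y : F) : 'cV['F_2]_(r0 + (m + m)) :=
  col_mx u (col_mx (phi x) (phi y)).

Lemma vcatD u x y u' x' y' : vcat u x y + vcat u' x' y' = vcat (u + u') (x + x') (y + y').
Proof. by rewrite /vcat !add_col_mx !phiD. Qed.

Lemma vcat0 : vcat 0 0 0 = 0.
Proof. by rewrite /vcat phi0 !col_mx0. Qed.

Lemma vcat_surj v : exists u x y, v = vcat u x y.
Proof.
have [x xE] := phi_surj (usubmx (dsubmx v)); have [y yE] := phi_surj (dsubmx (dsubmx v)).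
by exists (usubmx v), x, y; rewrite /vcat xE yE !vsubmxK.
Qed.

Definition A2col (h : 'cV['F_2]_r0) (b : option F) (xi : F) : 'cV['F_2]_(r0 + (m + m)) :=
  if b is Some c then col_mx h (col_mx (phi xi) (phi (c * xi)))
  else col_mx h (col_mx 0 (phi xi)).

Lemma A2col_None h xi : A2col h None xi = vcat h 0 xi.
Proof. by rewrite /vcat phi0. Qed.

Lemma usubmx_A2col h b xi : usubmx (A2col h b xi) = h.
Proof. by case: b => [c|]; rewrite col_mxKu. Qed.

Lemma A2col_inj h b : injective (A2col h b).
Proof.
move=> xi xi'; case: b => [c|] /eq_col_mx [_ /eq_col_mx []].
  by move/phi_inj.
by move=> _ /phi_inj.
Qed.

Lemma A2col0 h b : A2col h b 0 = col_mx h 0.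
Proof. by case: b => [c|]; rewrite /A2col ?mulr0 phi0 !col_mx0. Qed.

Section HC.
Variables (n0 : nat) (H0 : 'M['F_2]_(r0, n0)) (beta : 'I_n0 -> option F).
Variable w : 'cV['F_2]_m.

Lemma HC_colsE : HC_cols phi H0 beta w = D6_cols r0 w ++
  [seq A2col (col j H0) (beta j) xi | j <- enum 'I_n0, xi <- enum F].
Proof. by []. Qed.

Lemma mem_A2col j xi : A2col (col j H0) (beta j) xi \in HC_cols phi H0 beta w.
Proof.
rewrite HC_colsE mem_cat; apply/orP; right.
by apply/allpairsP; exists (j, xi); rewrite !mem_enum.
Qed.

Lemma usubmx_HC_cols x : x \in HC_cols phi H0 beta w ->
  usubmx x = 0 \/ exists j, usubmx x = col j H0.
Proof.
rewrite HC_colsE mem_cat => /orP [/usubmx_D6_cols|/allpairsP [[j xi] [_ _ ->]]].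
  by left.
by right; exists j; rewrite usubmx_A2col.
Qed.

Lemma HC_cols_col_or0_top u : col_or0 (HC_cols phi H0 beta w) (col_mx u 0) ->
  sum_of_at_most H0 1 u.
Proof.
have top0 : u = 0 -> sum_of_at_most H0 1 u.
  by move->; exists set0; rewrite cards0 big_set0.
case/orP => [/eqP/(congr1 usubmx)|/usubmx_HC_cols]; rewrite col_mxKu.
  by rewrite linear0; apply: top0.
by case=> [|[j ->]]; [apply: top0 | exists [set j]; rewrite cards1 big_set1].
Qed.

Hypothesis (nz0 : forall j, col j H0 != 0) (inj0 : injective (fun j => col j H0)).
Hypothesis w0 : w != 0.

Lemma HC_cols_neq0 : 0 \notin HC_cols phi H0 beta w.
Proof.
rewrite HC_colsE mem_cat negb_or D6_cols_neq0 //=.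
apply/allpairsP=> -[[j xi] [_ _ /(congr1 usubmx)]].
by rewrite usubmx_A2col linear0 => /eqP; rewrite eq_sym (negPf (nz0 j)).
Qed.

Lemma uniq_HC_cols : uniq (HC_cols phi H0 beta w).
Proof.
rewrite HC_colsE cat_uniq uniq_D6_cols /=; apply/andP; split.
  apply/hasPn => z /allpairsP [[j xi] [_ _ ->]] /=; apply/negP => /usubmx_D6_cols.
  by rewrite usubmx_A2col => /eqP; rewrite (negPf (nz0 j)).
apply: allpairs_uniq; rewrite ?enum_uniq // => -[j xi] [k xi'] _ _ /= e.
have jk : j = k.
  by apply: inj0; rewrite /= -(usubmx_A2col (col j H0) (beta j) xi) e usubmx_A2col.
by move: e; rewrite jk => /A2col_inj ->.
Qed.

Lemma HC_cols_dependency d :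
  (exists S : {set 'I_n0}, #|S| = d /\ \sum_(j in S) col j H0 = 0) ->
  exists S : {set 'I_(size (HC_cols phi H0 beta w))},
    #|S| = d /\ \sum_(j in S) col j (mxofcols (HC_cols phi H0 beta w)) = 0.
Proof.
case=> S [cS sS]; pose g j : 'cV['F_2]_(r0 + (m + m)) := col_mx (col j H0) 0.
have g_inj : injective g by move=> i k /eq_col_mx [/inj0].
have [|T [cT sT]] := @mxofcols_sum_set _ _ (g @: S) uniq_HC_cols.
  by move=> _ /imsetP [j _ ->]; rewrite /g -(A2col0 _ (beta j)) mem_A2col.
exists T; rewrite cT card_imset // sT big_imset /=; last by move=> i k _ _; apply: g_inj.
split=> //; rewrite -[RHS]col_mx0 -sS /g; symmetry.
by apply: (big_morph (fun u => col_mx u 0)) => [u v|]; rewrite ?add_col_mx ?addr0 ?col_mx0.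
Qed.

Lemma size_HC_cols : (1 <= m)%N -> #|F| = (2 ^ m)%N ->
  size (HC_cols phi H0 beta w) = (2 ^ m * (n0 + 2) - 3)%N.
Proof.
move=> m1 cardF; have : (2 <= 2 ^ m)%N by rewrite -{1}(expn1 2) leq_pexp2l.
rewrite HC_colsE size_cat size_allpairs /D6_cols !size_cat !size_map size_Wm_minus //.
rewrite -!enumT -!cardT card_ord cardF /=; move: (2 ^ m)%N => t t2.
rewrite mulnDr muln2 mulnC -addnn; lia.
Qed.

End HC.

End Construction.

Section Cover.
Variables (r0 n0 p m : nat) (F : finFieldType) (phi : F -> 'cV['F_2]_m).
Variables (H0 : 'M['F_2]_(r0, n0)) (f : 'I_n0 -> 'I_p) (beta : 'I_n0 -> option F).
Variables (w : 'cV['F_2]_m) (o : F).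
Hypotheses (phiD : forall x y : F, phi (x + y) = phi x + phi y) (phiB : bijective phi).
Hypotheses (phi_o : phi o = w) (o0 : o != 0).
Hypotheses (tp : two_partition H0 f) (p2 : (1 < p)%N).
Hypotheses (ia : indicator_assignment f beta) (beta1 : forall j, beta j <> Some 1).

Local Notation colz := (col_or0 (HC_cols phi H0 beta w)).

Let addFF : forall x : F, x + x = 0 := addrr_char2 phiD phiB.

Let addKF (x y : F) : x + (x + y) = y.
Proof. by rewrite addrA addFF add0r. Qed.

Let addrKF (x y : F) : y + x + x = y.
Proof. by rewrite -addrA addFF addr0. Qed.

Lemma col_or0_A2 j xi : colz (A2col phi (col j H0) (beta j) xi).
Proof. by rewrite /col_or0 mem_A2col orbT. Qed.

Lemma col_or0_Some j c xi : beta j = Some c -> colz (vcat phi (col j H0) xi (c * xi)).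
Proof. by move=> bj; have := col_or0_A2 j xi; rewrite bj. Qed.

Lemma col_or0_None j xi : beta j = None -> colz (vcat phi (col j H0) 0 xi).
Proof. by move=> bj; have := col_or0_A2 j xi; rewrite bj A2col_None. Qed.

Lemma col_or0_D6l x : x != o -> colz (vcat phi 0 x 0).
Proof.
have [->|x0 xo] := eqVneq x 0; first by rewrite vcat0 // /col_or0 eqxx.
have xW : phi x \in Wm_minus w.
  by rewrite mem_Wm_minus phi_eq0 // x0 -phi_o (inj_eq (phi_inj phiB)).
rewrite /col_or0 HC_colsE !mem_cat /vcat phi0 //.
by rewrite (map_f (fun y => col_mx 0 (col_mx y 0)) xW) !orbT.
Qed.

Lemma col_or0_D6r x : x != o -> colz (vcat phi 0 0 x).
Proof.
have [->|x0 xo] := eqVneq x 0; first by rewrite vcat0 // /col_or0 eqxx.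
have xW : phi x \in Wm_minus w.
  by rewrite mem_Wm_minus phi_eq0 // x0 -phi_o (inj_eq (phi_inj phiB)).
rewrite /col_or0 HC_colsE !mem_cat /vcat phi0 //.
by rewrite (map_f (fun y => col_mx 0 (col_mx 0 y)) xW) !orbT.
Qed.

Lemma col_or0_D6m : colz (vcat phi 0 o o).
Proof. by rewrite /col_or0 HC_colsE !mem_cat /vcat phi_o mem_seq1 eqxx !orbT. Qed.

Definition sum2 (v : 'cV['F_2]_(r0 + (m + m))) :=
  exists x y, [/\ colz x, colz y & v = x + y].

Lemma sum2_vcat u a b u1 a1 b1 u2 a2 b2 :
  colz (vcat phi u1 a1 b1) -> colz (vcat phi u2 a2 b2) ->
  u = u1 + u2 -> a = a1 + a2 -> b = b1 + b2 -> sum2 (vcat phi u a b).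
Proof.
move=> h1 h2 -> -> ->.
by exists (vcat phi u1 a1 b1), (vcat phi u2 a2 b2); rewrite vcatD.
Qed.

Lemma small_field_beta : (forall x : F, x = 0 \/ x = o) ->
  (exists j, beta j = Some 0) /\ (exists j, beta j = None).
Proof.
move=> small; have o1 : o = 1 by case: (small 1) => // /eqP; rewrite oner_eq0.
have beta01 j : beta j = None \/ beta j = Some 0.
  case bj: (beta j) => [c|]; [right | by left].
  by case: (small c) => [->|co] //; case: (@beta1 j); rewrite bj co o1.
case: tp => blocks _.
have [j0 f0] := blocks (Ordinal (ltnW p2)); have [j1 f1] := blocks (Ordinal p2).
have : beta j0 <> beta j1 by apply: ia; rewrite f0 f1.
by case: (beta01 j0) (beta01 j1) => e0 [] e1; rewrite e0 e1 // => _;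
  split; eexists; eassumption.
Qed.

Lemma sum2_axes : sum2 (vcat phi 0 o 0) /\ sum2 (vcat phi 0 0 o).
Proof.
have [/existsP [x /andP [x0 xo]]|nex] := boolP [exists x : F, (x != 0) && (x != o)].
  have xo' : x + o != o by apply: contra x0 => /eqP h; rewrite -(addrKF o x) h addFF.
  split.
    by apply: (sum2_vcat (col_or0_D6l xo) (col_or0_D6l xo')); rewrite ?addr0 ?addKF.
  by apply: (sum2_vcat (col_or0_D6r xo) (col_or0_D6r xo')); rewrite ?addr0 ?addKF.
have small x : x = 0 \/ x = o.
  have [|x0] := eqVneq x 0; [by left | right].
  by apply/eqP; apply: contraR nex => xo; apply/existsP; exists x; rewrite x0.
have [[j bj] [k bk]] := small_field_beta small; split.
  apply: (sum2_vcat (col_or0_Some o bj) (col_or0_Some 0 bj));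
    by rewrite ?mul0r ?addr0 // addrr_F2.
apply: (sum2_vcat (col_or0_None o bk) (col_or0_None 0 bk));
  by rewrite ?addr0 // addrr_F2.
Qed.

Lemma sum2_top0 a b : sum2 (vcat phi 0 a b).
Proof.
have zo : 0 != o by rewrite eq_sym.
have [->|ao] := eqVneq a o; have [->|bo] := eqVneq b o.
- by apply: (sum2_vcat col_or0_D6m (col_or0_D6l zo)); rewrite ?addr0.
- have [->|b0] := eqVneq b 0; first by case: sum2_axes.
  have bo' : b + o != o by apply: contra b0 => /eqP h; rewrite -(addrKF o b) h addFF.
  apply: (sum2_vcat col_or0_D6m (col_or0_D6r bo'));
    by rewrite ?addr0 // [RHS]addrC addrKF.
- have [->|a0] := eqVneq a 0; first by case: sum2_axes.
  have ao' : a + o != o by apply: contra a0 => /eqP h; rewrite -(addrKF o a) h addFF.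
  apply: (sum2_vcat col_or0_D6m (col_or0_D6l ao'));
    by rewrite ?addr0 // [RHS]addrC addrKF.
- by apply: (sum2_vcat (col_or0_D6l ao) (col_or0_D6r bo)); rewrite ?addr0 ?add0r.
Qed.

Lemma sum2_col j a b : sum2 (vcat phi (col j H0) a b).
Proof.
case bj: (beta j) => [c|]; last first.
  have [->|ao] := eqVneq a o.
    apply: (sum2_vcat (col_or0_None (b + o) bj) col_or0_D6m);
      by rewrite ?addr0 ?add0r ?addrKF.
  by apply: (sum2_vcat (col_or0_None b bj) (col_or0_D6l ao)); rewrite ?addr0 ?add0r.
have [e|ne] := eqVneq (b + c * a) o; last first.
  apply: (sum2_vcat (col_or0_Some a bj) (col_or0_D6r ne));
    by rewrite ?addr0 // [RHS]addrC addrKF.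
have [c0|c0] := eqVneq c 0.
  have bo : b = o by rewrite -e c0 mul0r addr0.
  apply: (sum2_vcat (col_or0_Some (a + o) bj) col_or0_D6m); rewrite ?addr0 ?addrKF //.
  by rewrite c0 mul0r add0r.
have [e2|ne2] := eqVneq (a + b / c) o; last first.
  apply: (sum2_vcat (col_or0_Some (b / c) bj) (col_or0_D6l ne2)); rewrite ?addr0 //.
    by rewrite [RHS]addrC addrKF.
  by rewrite mulrC divfK.
(* here c * o = c * a + b = o, which forces the excluded value c = 1 *)
case: (@beta1 j); rewrite bj.
have co : c * o = o by rewrite -{1}e2 mulrDr [c * (b / c)]mulrC divfK // addrC e.
have : (c - 1) * o == 0 by rewrite mulrBl co mul1r subrr.
by rewrite mulf_eq0 (negPf o0) orbF subr_eq0 => /eqP ->.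
Qed.

Lemma sum2_col_pair i k a b :
  beta i <> beta k -> sum2 (vcat phi (col i H0 + col k H0) a b).
Proof.
case bi: (beta i) => [d1|]; case bk: (beta k) => [d2|] ne //.
- have d0 : d1 - d2 != 0 by rewrite subr_eq0; apply/eqP => e; apply: ne; rewrite e.
  pose xi := (b - d2 * a) / (d1 - d2).
  apply: (sum2_vcat (col_or0_Some xi bi) (col_or0_Some (a - xi) bk)) => //.
    by rewrite addrC subrK.
  by rewrite /xi; field.
- apply: (sum2_vcat (col_or0_Some a bi) (col_or0_None (b - d1 * a) bk));
    by rewrite ?addr0 // addrC subrK.
- apply: (sum2_vcat (col_or0_None (b - d2 * a) bi) (col_or0_Some a bk));
    by rewrite ?add0r // subrK.
Qed.

Lemma sum2_all v : sum2 v.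
Proof.
have [u [a [b ->]]] := vcat_surj phiB v.
have [->|u0] := eqVneq u 0; first exact: sum2_top0.
have [_ /(_ u) [S [_ cS inj sS]]] := tp.
move: cS; rewrite leq_eqVlt ltnS leq_eqVlt ltnS leqn0 => /or3P [].
- case/cards2P=> [i [k [ik SE]]]; move: sS inj; rewrite SE big_setU1 ?inE //= big_set1.
  move=> <- inj; apply/sum2_col_pair/ia; apply: contra ik => /eqP fik.
  by apply/eqP/inj; rewrite ?inE ?eqxx ?orbT.
- by case/cards1P=> j SE; move: sS; rewrite SE big_set1 => <-; apply: sum2_col.
- by rewrite cards_eq0 => /eqP S0; move: sS u0; rewrite S0 big_set0 => ->; rewrite eqxx.
Qed.

Lemma HC_cols_cover v : sum_of_at_most (mxofcols (HC_cols phi H0 beta w)) 2 v.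
Proof. by have [x [y [hx hy ->]]] := sum2_all v; apply: col_or0_sum2. Qed.

End Cover.

Unset Implicit Arguments.

Theorem theorem5p1 (r0 n0 p m : nat) (H0 : 'M['F_2]_(r0, n0))
  (f : 'I_n0 -> 'I_p) (F : finFieldType) (phi : F -> 'cV['F_2]_m)
  (beta : 'I_n0 -> option F) (w : 'cV['F_2]_m) :
  code_params H0 3 2 ->
  two_partition H0 f ->
  (1 <= m)%N ->
  (p <= 2 ^ m)%N ->
  #|F| = (2 ^ m)%N ->
  (forall x y : F, phi (x + y) = phi x + phi y) ->
  bijective phi ->
  indicator_assignment f beta ->
  (forall j, beta j <> Some 1) ->
  w != 0 ->
  size (HC_cols phi H0 beta w) = (2 ^ m * (n0 + 2) - 3)%N /\
  code_params (mxofcols (HC_cols phi H0 beta w)) 3 2.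
Proof.
move=> [_ [md0 cr0]] tp m1 _ cardF phiD phiB ia beta1 w0.
have nz0 := min_distance_col_neq0 md0 isT.
have inj0 := min_distance_col_inj md0 isT.
have [u nu] := covering_radius_witness cr0.
have p2 : (1 < p)%N.
  rewrite ltnNge; apply/negP => p1; apply: nu.
  exact: sum_of_at_most_le p1 (Rl_partition_cover_blocks tp u).
have [o phi_o] := phi_surj phiB w.
have o0 : o != 0 by apply: contra w0 => /eqP o0; rewrite -phi_o o0 phi0.
have cover := HC_cols_cover phiD phiB phi_o o0 tp p2 ia beta1.
split; first exact: size_HC_cols.
split; first exact: full_rank_of_cover cover.
split; last first.
  apply: covering_radiusS cover _; exists (col_mx u 0).
  by move=> /col_or0_sum1 /HC_cols_col_or0_top.
apply: min_distance3.
- by move=> j; apply/mxofcols_col_neq0/HC_cols_neq0.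
- exact/mxofcols_col_inj/uniq_HC_cols.
- exact/HC_cols_dependency/(min_distance_dependency md0).
Qed.
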